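(* Fix a history $h_t$ and let $(\hat{Y}_t, O, Z)$ be jointly distributed given $h_t$, with $\hat Y_t\in\mathcal V$ (finite), $O\in\{0,1\}$, $Z$ in a countable set. Assume (outcome-sufficiency) $Z$ is conditionally independent of $\hat{Y}_t$ given $(O, h_t)$, and let $z$ be a feedback value that is positively informative for success: $q_1(z,h_t) > q_0(z,h_t)$. Then for any two candidates $\hat{y}_t, \hat{y}'_t\in\mathcal V$ with positive probability given $h_t$ and with $p(\hat y_t;h_t),p(\hat y'_t;h_t)>0$, \[ r_t^{\mathrm{cf}}(\hat{y}_t; h_t) \ge r_t^{\mathrm{cf}}(\hat{y}'_t; h_t) \iff r_t^{z}(\hat{y}_t; h_t) \ge r_t^{z}(\hat{y}'_t; h_t). \]
   Context: Notation: $p(\hat{y}_t; h_t) := P(O = 1 \mid \hat{Y}_t = \hat{y}_t, h_t)$; $q_b(z, h_t) := P(Z = z \mid O = b, h_t)$ for $b\in\{0,1\}$ (assume $P(O=b\mid h_t)>0$). Interventional credit (in identified form): $r_t^{\mathrm{cf}}(\hat{y}_t; h_t) := \log P(O=1 \mid \hat{Y}_t=\hat{y}_t, h_t) - \log P(O=1\mid h_t)$; this equals the interventional quantity $\log P(O=1\mid \mathrm{do}(\hat Y_t=\hat y_t),h_t) - \log P(O=1\mid h_t)$ under consistency, sequential ignorability and positivity. Feedback-conditioned reward: $r_t^{z}(\hat{y}_t; h_t) := \log P(Z=z \mid \hat{Y}_t=\hat{y}_t, h_t) - \log P(Z=z\mid h_t)$ (which coincides with the self-distillation reward under posterior compatibility).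 Assume $P(Z=z\mid h_t)>0$ and $P(O=1\mid h_t)>0$. *)

From HB Require Import structures.
From mathcomp Require Import all_boot all_order all_algebra.
From mathcomp Require Import all_classical all_reals.
From mathcomp Require Import ereal esum exp.
Set Implicit Arguments. Unset Strict Implicit. Unset Printing Implicit Defensive.
Import Order.TTheory GRing.Theory Num.Theory.
Local Open Scope ring_scope.

(* Everything is conditional on a fixed history h_t, so we model directly the
   conditional joint distribution of (Yhat_t, O, Z) given h_t, as a probability
   mass function  pm y o z = P(Yhat=y, O=o, Z=z | h_t)  on V x bool x Z,
   V finite, Z countable. O = 1 is encoded as [true]. *)

Section Dist.
Variables (R : realType) (V : finType) (Z : countType).
Variable pm : V -> bool -> Z -> R.

Definition is_pmf : Prop :=
  (forall y o z, 0 <= pm y o z) /\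
  (\sum_(y : V) \sum_(o : bool)
       (\esum_(z in [set: Z]) (pm y o z)%:E))%E = 1%E.

Definition P_YO (y : V) (o : bool) : R :=
  fine (\esum_(z in [set: Z]) (pm y o z)%:E)%E.
Definition P_Y (y : V) : R := \sum_(o : bool) P_YO y o.
Definition P_O (o : bool) : R := \sum_(y : V) P_YO y o.
Definition P_OZ (o : bool) (z : Z) : R := \sum_(y : V) pm y o z.
Definition P_YZ (y : V) (z : Z) : R := \sum_(o : bool) pm y o z.
Definition P_Z (z : Z) : R := \sum_(y : V) \sum_(o : bool) pm y o z.

Definition p_succ (y : V) : R := P_YO y true / P_Y y.
Definition q (b : bool) (z : Z) : R := P_OZ b z / P_O b.

Definition outcome_sufficient : Prop :=
  forall (o : bool) (y : V) (z : Z), 0 < P_O o ->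
    pm y o z / P_O o = (P_YO y o / P_O o) * (P_OZ o z / P_O o).

(* interventional credit (identified form) *)
Definition r_cf (y : V) : R := ln (p_succ y) - ln (P_O true).
Definition r_z (z : Z) (y : V) : R := ln (P_YZ y z / P_Y y) - ln (P_Z z).

End Dist.

From HB Require Import structures.
From mathcomp Require Import all_boot all_order all_algebra.
From mathcomp Require Import all_classical all_reals.
From mathcomp Require Import ereal esum exp.
From mathcomp Require Import ring.
Import Order.TTheory GRing.Theory Num.Theory.
Local Open Scope ring_scope.

(** Outcome-sufficiency makes the likelihood of the feedback a mixture
    P(Z = z | Yhat = y) = q_0 + p(y) (q_1 - q_0), an increasing affine function
    of the success probability p(y) when q_1 > q_0.  Both rewards are logarithms
    of increasing functions of p(y), up to additive constants, so they order
    the candidates identically. *)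

Section FeedbackReward.
Context {R : realType} {V : finType} {Z : countType}.
Variable pm : V -> bool -> Z -> R.

Lemma pm_outcome_factor (o : bool) (w : V) (z : Z) :
  outcome_sufficient pm -> 0 < P_O pm o ->
  pm w o z = P_YO pm w o * q pm o z.
Proof.
move=> suff PO; have PO_neq0 : P_O pm o != 0 by rewrite gt_eqF.
have -> : pm w o z = pm w o z / P_O pm o * P_O pm o by field.
by rewrite suff // /q; field.
Qed.

Lemma P_YZ_mixture (z : Z) (w : V) :
  outcome_sufficient pm -> 0 < P_O pm true -> 0 < P_O pm false ->
  0 < P_Y pm w ->
  P_YZ pm w z / P_Y pm w
    = q pm false z + p_succ pm w * (q pm true z - q pm false z).
Proof.
move=> suff PO1 PO0 PY; have PY_neq0 : P_Y pm w != 0 by rewrite gt_eqF.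
have P_Y_split : P_Y pm w = P_YO pm w true + P_YO pm w false.
  by rewrite /P_Y big_bool.
have fail_E : P_YO pm w false = P_Y pm w - P_YO pm w true.
  by rewrite P_Y_split; ring.
rewrite /P_YZ /p_succ big_bool /= !(pm_outcome_factor _ _ _ suff) //.
by rewrite fail_E; field.
Qed.

Lemma q_ge0 (b : bool) (z : Z) :
  (forall w o z, 0 <= pm w o z) -> 0 < P_O pm b -> 0 <= q pm b z.
Proof.
by move=> pm_ge0 PO; apply: divr_ge0; [exact: sumr_ge0 | exact: ltW].
Qed.

Lemma ler_r_cf (y y' : V) :
  0 < p_succ pm y -> 0 < p_succ pm y' ->
  (r_cf pm y' <= r_cf pm y) = (p_succ pm y' <= p_succ pm y).
Proof. by move=> p_gt0 p'_gt0; rewrite lerD2r ler_ln ?posrE. Qed.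

Lemma ler_r_z (z : Z) (y y' : V) :
  0 < P_YZ pm y z / P_Y pm y -> 0 < P_YZ pm y' z / P_Y pm y' ->
  (r_z pm z y' <= r_z pm z y)
    = (P_YZ pm y' z / P_Y pm y' <= P_YZ pm y z / P_Y pm y).
Proof. by move=> lik_gt0 lik'_gt0; rewrite lerD2r ler_ln ?posrE. Qed.

End FeedbackReward.

Lemma ler_affine (R : realFieldType) (a d x x' : R) :
  0 < d -> (a + x' * d <= a + x * d) = (x' <= x).
Proof. by move=> d_gt0; rewrite lerD2l ler_pM2r. Qed.

Lemma affine_gt0 (R : realFieldType) (a d x : R) :
  0 <= a -> 0 < d -> 0 < x -> 0 < a + x * d.
Proof. by move=> a_ge0 d_gt0 x_gt0; apply: ltr_wpDl => //; exact: mulr_gt0. Qed.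

Theorem proposition2 (R : realType) (V : finType) (Z : countType)
    (pm : V -> bool -> Z -> R) (z : Z) (y y' : V) :
  is_pmf pm ->
  0 < P_O pm true -> 0 < P_O pm false ->
  0 < P_Z pm z ->
  outcome_sufficient pm ->
  q pm false z < q pm true z ->
  0 < P_Y pm y -> 0 < P_Y pm y' ->
  0 < p_succ pm y -> 0 < p_succ pm y' ->
  (r_cf pm y' <= r_cf pm y <-> r_z pm z y' <= r_z pm z y).
Proof.
move=> [pm_ge0 _] PO1 PO0 _ suff q_lt PY PY' p_gt0 p'_gt0.
have d_gt0 : 0 < q pm true z - q pm false z by rewrite subr_gt0.
have q0_ge0 := q_ge0 pm false z pm_ge0 PO0.
have lik_gt0 w : 0 < P_Y pm w -> 0 < p_succ pm w -> 0 < P_YZ pm w z / P_Y pm w.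
  by move=> PYw pw; rewrite P_YZ_mixture // affine_gt0.
rewrite ler_r_cf // ler_r_z ?lik_gt0 //.
by rewrite !(P_YZ_mixture pm z _ suff) // ler_affine.
Qed.
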